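(* Let $I$ be an instance of OWA-k-Median with facilities $\mathcal{F}$, clients $D_1,\dots,D_n$, costs $c_{ij}$, integer $k$, and non-increasing nonnegative rational weights $w_\ell=p_\ell/q_\ell$ (in lowest terms), $\ell\in[k]$. Let $Q=\prod_{r=1}^k q_r$ and construct the instance $I'$ of Fault-Tolerant $k$-Median with Multiplicities with the same facilities, same $k$, and in which each client $D_j$ is replaced by clients $D_{j,1},\dots,D_{j,k}$ located where $D_j$ is (i.e., with the same costs $c_{i,(j,\ell)}=c_{ij}$), where $D_{j,\ell}$ has connectivity requirement $\ell$ and multiplicity $m_{j,\ell}=(w_\ell-w_{\ell+1})Q$ for $\ell\in[k-1]$ and $m_{j,k}=w_kQ$. Then for every $\alpha\ge1$, every $\alpha$-approximate solution to $I'$ is an $\alpha$-approximate solution to $I$.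
   Context: OWA-k-Median: for a $k$-set $C$ of facilities and client $D_j$, let $c^{\rightarrow}_1(C,j)\le\dots\le c^{\rightarrow}_k(C,j)$ be the costs $\{c_{ij}:F_i\in C\}$ in non-decreasing order; the objective is to minimize $\sum_{j}\sum_{i=1}^k w_i c^{\rightarrow}_i(C,j)$ over $k$-sets $C$. Fault-Tolerant $k$-Median with Multiplicities: clients $D'$ with requirements $r\in[k]$ and multiplicities $m\in\mathbb{N}$; a $k$-set $C$ of facilities has cost $\sum_{D'} m_{D'}\cdot(\text{sum of costs of the } r_{D'} \text{ facilities of } C \text{ closest to } D')$, to be minimized. A solution is $\alpha$-approximate if its cost is at most $\alpha$ times the optimum. *)

From HB Require Import structures.
From mathcomp Require Import all_boot all_order all_algebra.
Set Implicit Arguments. Unset Strict Implicit. Unset Printing Implicit Defensive.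
Import Order.TTheory GRing.Theory Num.Theory.
Local Open Scope ring_scope.

Section Defs.
Variables (R : realFieldType) (F : finType).

(* costs of the facilities of C seen from client j, in non-decreasing order:
   the i-th entry (0-based) is c^->_{i+1}(C,j) *)
Definition sorted_costs (Cl : Type) (c : F -> Cl -> R) (C : {set F}) (j : Cl)
  : seq R := sort <=%R [seq c i j | i <- enum C].

Definition owa_cost (n k : nat) (c : F -> 'I_n -> R) (w : 'I_k -> rat)
  (C : {set F}) : R :=
  \sum_(j < n) \sum_(l < k) ratr (w l) * nth 0 (sorted_costs c C j) l.

Definition ft_cost (Cl : finType) (c : F -> Cl -> R) (r m : Cl -> nat)
  (C : {set F}) : R :=
  \sum_(d : Cl) (m d)%:R * \sum_(t < r d) nth 0 (sorted_costs c C d) t.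

Definition approx_sol (k : nat) (cost : {set F} -> R) (alpha : R)
  (C : {set F}) : Prop :=
  #|C| = k /\ forall C' : {set F}, #|C'| = k -> cost C <= alpha * cost C'.

End Defs.

(* weight w_l with 0-based l; w_k (i.e. past the end) is 0 *)
Definition wext (k : nat) (w : 'I_k -> rat) (l : nat) : rat :=
  if insub l is Some i then w i else 0.

Definition Qden (k : nat) (w : 'I_k -> rat) : int := \prod_(l < k) denq (w l).

(* the instance I' : clients (j, l) (0-based l, requirement l+1),
   multiplicity (w_l - w_{l+1}) Q  (which is a nonnegative integer) *)
Definition red_cost (R : realFieldType) (F : finType) (n k : nat)
  (c : F -> 'I_n -> R) : F -> 'I_n * 'I_k -> R := fun i jl => c i jl.1.
Definition red_req (n k : nat) (jl : 'I_n * 'I_k) : nat := (jl.2).+1.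
Definition red_mult (n k : nat) (w : 'I_k -> rat) (jl : 'I_n * 'I_k) : nat :=
  `|numq ((wext w jl.2 - wext w (jl.2).+1) * (Qden w)%:~R)|%N.

(* Summation by parts rewrites the OWA cost of a client with sorted costs
   s_1 <= ... <= s_k as  sum_l w_l s_l = sum_l (w_l - w_{l+1}) (s_1 + ... + s_l)
   (with w_{k+1} = 0), which is the cost of the clients (j, 1), ..., (j, k) of
   I' divided by Q.  Hence every k-set costs in I' exactly Q times its cost in I,
   and scaling a cost function by Q > 0 preserves alpha-approximate solutions. *)

From HB Require Import structures.
From mathcomp Require Import all_boot all_order all_algebra.
From mathcomp Require Import ring.
Import Order.TTheory GRing.Theory Num.Theory.
Local Open Scope ring_scope.

Lemma sum_by_parts (R : comPzRingType) (a s : nat -> R) (k : nat) :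
  \sum_(l < k) (a l - a l.+1) * \sum_(t < l.+1) s t =
  \sum_(l < k) a l * s l - a k * \sum_(t < k) s t.
Proof.
elim: k => [|k IHk]; first by rewrite !big_ord0 mulr0 subr0.
by rewrite !big_ord_recr /= IHk; ring.
Qed.

Lemma approx_sol_scale (R : realFieldType) (F : finType) (k : nat)
    (cost' cost : {set F} -> R) (q : R) (alpha : R) (C : {set F}) :
    0 < q -> (forall C', cost' C' = q * cost C') ->
  approx_sol k cost' alpha C -> approx_sol k cost alpha C.
Proof.
move=> q_gt0 cost'E [cardC optC]; split=> // C' cardC'.
by have := optC C' cardC'; rewrite !cost'E mulrCA ler_pM2l.
Qed.

Section Weights.
Variables (k : nat) (w : 'I_k -> rat).

Lemma wext_ord (i : 'I_k) : wext w i = w i.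
Proof. by rewrite /wext valK. Qed.

Lemma wext_size : wext w k = 0.
Proof. by rewrite /wext insubN // ltnn. Qed.

Lemma Qden_gt0 : 0 < Qden w.
Proof. by apply: prodr_gt0 => i _; apply: denq_gt0. Qed.

Lemma wext_Qden_int (l : nat) : exists z : int, wext w l * (Qden w)%:~R = z%:~R.
Proof.
rewrite /wext; case: insubP => [i _ _|_]; last by exists 0; rewrite mul0r.
exists (numq (w i) * \prod_(j | j != i) denq (w j)).
by rewrite /Qden (bigD1 i) //= !intrM mulrA -numqE.
Qed.

Lemma owa_by_parts (R : realFieldType) (s : nat -> R) :
  \sum_(l < k) ratr (w l) * s l =
  \sum_(l < k) ratr (wext w l - wext w l.+1) * \sum_(t < l.+1) s t.
Proof.
have := @sum_by_parts R (fun l => ratr (wext w l)) s k.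
rewrite /= wext_size rmorph0 mul0r subr0 => by_parts.
transitivity (\sum_(l < k) ratr (wext w l) * s l).
  by apply: eq_bigr => l _; rewrite wext_ord.
by rewrite -by_parts; apply: eq_bigr => l _; rewrite rmorphB.
Qed.

Hypothesis w_ge0 : forall l : 'I_k, 0 <= w l.
Hypothesis w_noninc : forall l l' : 'I_k, (l <= l')%N -> w l' <= w l.

Lemma wext_succ_le (l : 'I_k) : wext w l.+1 <= wext w l.
Proof.
rewrite wext_ord; case: (ltnP l.+1 k) => [lt_l1k | le_k_l1].
  by rewrite -[l.+1]/(val (Ordinal lt_l1k)) wext_ord; apply: w_noninc => /=.
have -> : l.+1 = k by apply/eqP; rewrite eqn_leq le_k_l1 ltn_ord.
by rewrite wext_size.
Qed.

Lemma red_multE (n : nat) (j : 'I_n) (l : 'I_k) :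
  (red_mult w (j, l))%:R = (wext w l - wext w l.+1) * (Qden w)%:~R.
Proof.
have [z1 z1E] := wext_Qden_int l; have [z2 z2E] := wext_Qden_int l.+1.
have multE : (wext w l - wext w l.+1) * (Qden w)%:~R = (z1 - z2)%:~R.
  by rewrite mulrBl z1E z2E intrB.
have z_ge0 : 0 <= z1 - z2.
  rewrite -(ler0z rat) -multE mulr_ge0 ?subr_ge0 ?wext_succ_le //.
  by rewrite ler0z ltW // Qden_gt0.
by rewrite /red_mult /= multE numq_int natr_absz ger0_norm.
Qed.

Lemma ft_cost_red (R : realFieldType) (F : finType) (n : nat)
    (c : F -> 'I_n -> R) (C : {set F}) :
  ft_cost (red_cost c) (@red_req n k) (red_mult w) C = (Qden w)%:~R * owa_cost c w C.
Proof.
rewrite /ft_cost /owa_cost -(pair_bigA _ (fun j l =>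
  (red_mult w (j, l))%:R * \sum_(t < l.+1) nth 0 (sorted_costs c C j) t)) /=.
rewrite mulr_sumr; apply: eq_bigr => j _.
rewrite owa_by_parts mulr_sumr; apply: eq_bigr => l _.
by rewrite -ratr_nat red_multE rmorphM rmorph_int /= mulrCA mulrA.
Qed.

End Weights.

Theorem lemma3 (R : realFieldType) (F : finType) (n k : nat)
  (c : F -> 'I_n -> R) (w : 'I_k -> rat)
  (w_ge0 : forall l : 'I_k, 0 <= w l)
  (w_noninc : forall l l' : 'I_k, (l <= l')%N -> w l' <= w l)
  (alpha : R) (alpha_ge1 : 1 <= alpha) (C : {set F}) :
  approx_sol k (ft_cost (@red_cost R F n k c) (@red_req n k) (@red_mult n k w)) alpha C ->
  approx_sol k (owa_cost c w) alpha C.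
Proof.
apply: approx_sol_scale; last exact: ft_cost_red.
by rewrite ltr0z Qden_gt0.
Qed.
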